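(* Let $\lambda_1,\lambda_2,\alpha>0$ and $\theta\in[-1,1]$. Let $(X_1,X_2)$ have joint pdf $$f(x_1,x_2)=\left\{1+\theta\left[1-2e^{-\lambda_1x_1}\right]\left[1-2e^{-\lambda_2x_2}\right]\right\}\lambda_1e^{-\lambda_1x_1}\lambda_2e^{-\lambda_2x_2},\qquad x_1,x_2>0$$ (exponential marginals with rates $\lambda_1,\lambda_2$ coupled by the Farlie–Gumbel–Morgenstern copula $C(u,v)=uv\{1+\theta(1-u)(1-v)\}$). Then $$P(\alpha X_1>X_2)=\frac{\lambda_2\alpha}{\lambda_1+\lambda_2\alpha}+\theta\lambda_1\left[\frac{2}{2\lambda_1+\lambda_2\alpha}+\frac{1}{\lambda_1+2\lambda_2\alpha}-\frac{2}{\lambda_1+\lambda_2\alpha}\right],$$ and the conditional pdf of $X=X_1\mid\alpha X_1>X_2$ is, for $x>0$, $$f^{w}(x;\lambda_1,\lambda_2,\alpha,\theta)=K\,e^{-\lambda_1x}\left(1-e^{-\lambda_2\alpha x}\right)\left[1-\theta e^{-\lambda_2\alpha x}\left(1-2e^{-\lambda_1x}\right)\right],\qquad K=\frac{\lambda_1}{P(\alpha X_1>X_2)}.$$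
   Context: The distribution with this pdf $f^w$ is called the Generalized Weighted Exponential Distribution (GWED) with parameters $\lambda_1,\lambda_2,\alpha>0$, $\theta\in[-1,1]$. *)

From Stdlib Require Import Reals Lra.
Open Scope R_scope.

Definition fgm_exp_pdf (l1 l2 th x1 x2 : R) : R :=
  (1 + th * (1 - 2 * exp (- (l1 * x1))) * (1 - 2 * exp (- (l2 * x2))))
  * (l1 * exp (- (l1 * x1))) * (l2 * exp (- (l2 * x2))).

Definition is_RInt (f : R -> R) (a b l : R) : Prop :=
  exists pr : Riemann_integrable f a b, RiemannInt pr = l.

Definition is_RInt_0_inf (f : R -> R) (l : R) : Prop :=
  (forall b, 0 <= b -> inhabited (Riemann_integrable f 0 b)) /\
  (forall eps, 0 < eps -> exists M, forall b (pr : Riemann_integrable f 0 b),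
      M <= b -> Rabs (RiemannInt pr - l) < eps).

Definition P_closed (l1 l2 a th : R) : R :=
  l2 * a / (l1 + l2 * a)
  + th * l1 * (2 / (2 * l1 + l2 * a) + 1 / (l1 + 2 * l2 * a) - 2 / (l1 + l2 * a)).

Definition gwed_pdf (K l1 l2 a th x : R) : R :=
  K * exp (- (l1 * x)) * (1 - exp (- (l2 * a * x)))
  * (1 - th * exp (- (l2 * a * x)) * (1 - 2 * exp (- (l1 * x)))).

(* The integrand in x2 is a combination of
   exp(-l2 x2) and exp(-2 l2 x2); integrating it over [0, a x1] gives the
   sub-density of X1 on {a X1 > X2}, a combination of the five exponentials
   exp(-c x1), c in {l1, l1 + l2 a, 2 l1 + l2 a, l1 + 2 l2 a, 2 (l1 + l2 a)}.
   This has an explicit primitive vanishing at +oo, so P(a X1 > X2) is minus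
   its value at 0, and the conditional density is the sub-density divided by
   this probability. *)

From Stdlib Require Import Reals Lra.
From Coquelicot Require Import Coquelicot.
Open Scope R_scope.

Section Primitive.

Variables (F f : R -> R).
Hypothesis F_derive : forall x, is_derive F x (f x).
Hypothesis f_derivable : forall x, ex_derive f x.

Let f_cont x : continuous f x.
Proof. exact (ex_derive_continuous (K := R_AbsRing) (V := R_NormedModule) f x (f_derivable x)). Qed.

Lemma RInt_primitive a b : RInt.is_RInt f a b (F b - F a).
Proof. exact (is_RInt_derive F f a b (fun x _ => F_derive x) (fun x _ => f_cont x)). Qed.

Lemma RiemannInt_primitive a b (pr : Riemann_integrable f a b) :
  RiemannInt pr = F b - F a.
Proof. rewrite <- RInt_Reals. exact (is_RInt_unique _ _ _ _ (RInt_primitive a b)). Qed.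

Lemma Riemann_integrable_primitive a b : Riemann_integrable f a b.
Proof. exact (ex_RInt_Reals_0 f a b (ex_intro _ _ (RInt_primitive a b))). Qed.

Lemma is_RInt_primitive a b : is_RInt f a b (F b - F a).
Proof. exists (Riemann_integrable_primitive a b). apply RiemannInt_primitive. Qed.

Lemma is_RInt_0_inf_primitive (L : R) :
  is_lim F p_infty L -> is_RInt_0_inf f (L - F 0).
Proof.
  intros F_lim. apply is_lim_spec in F_lim. split.
  - intros b _. constructor. apply Riemann_integrable_primitive.
  - intros eps eps_gt0. destruct (F_lim (mkposreal eps eps_gt0)) as [M HM].
    exists (M + 1). intros b pr Mb.
    rewrite RiemannInt_primitive.
    replace (F b - F 0 - (L - F 0)) with (F b - L) by ring.
    apply HM. lra.
Qed.

End Primitive.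

Lemma is_lim_exp_decay (k c : R) :
  0 < c -> is_lim (fun x => k * exp (- (c * x))) p_infty 0.
Proof.
  intros c_gt0.
  replace (Finite 0) with (Rbar_mult k 0) by (simpl; f_equal; ring).
  apply is_lim_scal_l.
  apply (is_lim_comp exp (fun x => - (c * x)) p_infty 0 m_infty).
  - exact is_lim_exp_m.
  - replace m_infty with (Rbar_opp (Rbar_mult c p_infty)).
    + apply is_lim_opp, is_lim_scal_l, is_lim_id.
    + unfold Rbar_mult, Rbar_mult'.
      destruct (Rle_dec 0 c) as [c_ge0|]; [destruct (Rle_lt_or_eq_dec 0 c c_ge0)|];
        reflexivity || lra.
  - exists 0. intros x _. discriminate.
Qed.

Lemma fgm_exp_pdf_section_integral (l1 l2 th x1 T : R) :
  is_RInt (fun x2 => fgm_exp_pdf l1 l2 th x1 x2) 0 T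
    (l1 * exp (- (l1 * x1)) * (1 - exp (- (l2 * T)))
     * (1 - th * exp (- (l2 * T)) * (1 - 2 * exp (- (l1 * x1))))).
Proof.
  set (u := exp (- (l1 * x1))).
  set (H := fun y => let w := exp (- (l2 * y)) in
              l1 * u * (- w + th * (1 - 2 * u) * (w * w - w))).
  assert (H_derive : forall y, is_derive H y (fgm_exp_pdf l1 l2 th x1 y)).
  { intros y. unfold H, fgm_exp_pdf. fold u. auto_derive; [easy | ring]. }
  replace (l1 * u * _ * _) with (H T - H 0).
  - apply is_RInt_primitive; [exact H_derive |].
    intros y. unfold fgm_exp_pdf. auto_derive. easy.
  - unfold H. rewrite Rmult_0_r, Ropp_0, exp_0. ring.
Qed.

Definition event_density (l1 l2 a th x : R) : R :=
  l1 * exp (- (l1 * x)) * (1 - exp (- (l2 * a * x)))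
  * (1 - th * exp (- (l2 * a * x)) * (1 - 2 * exp (- (l1 * x)))).

Definition event_density_primitive (l1 l2 a th x : R) : R :=
  let r := l2 * a in
  - 1 * exp (- (l1 * x))
  + (1 + th) * l1 / (l1 + r) * exp (- ((l1 + r) * x))
  + - 2 * th * l1 / (2 * l1 + r) * exp (- ((2 * l1 + r) * x))
  + - th * l1 / (l1 + 2 * r) * exp (- ((l1 + 2 * r) * x))
  + th * l1 / (l1 + r) * exp (- (2 * (l1 + r) * x)).

Section EventDensity.

Variables l1 l2 a th : R.
Hypotheses (l1_gt0 : 0 < l1) (l2_gt0 : 0 < l2) (a_gt0 : 0 < a).

Let r_gt0 : 0 < l2 * a. Proof. now apply Rmult_lt_0_compat. Qed.

Lemma event_density_primitive_derive x :
  is_derive (event_density_primitive l1 l2 a th) x (event_density l1 l2 a th x).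
Proof.
  unfold event_density_primitive, event_density. auto_derive; [repeat split; lra |].
  set (u := exp (- (l1 * x))). set (v := exp (- (l2 * a * x))).
  assert (exp_uv : exp (- ((l1 + l2 * a) * x)) = u * v)
    by (unfold u, v; rewrite <- exp_plus; f_equal; ring).
  assert (exp_uuv : exp (- ((2 * l1 + l2 * a) * x)) = u * u * v)
    by (unfold u, v; rewrite <- !exp_plus; f_equal; ring).
  assert (exp_uvv : exp (- ((l1 + 2 * (l2 * a)) * x)) = u * v * v)
    by (unfold u, v; rewrite <- !exp_plus; f_equal; ring).
  assert (exp_uuvv : exp (- (2 * (l1 + l2 * a) * x)) = u * u * v * v)
    by (unfold u, v; rewrite <- !exp_plus; f_equal; ring).
  rewrite exp_uv, exp_uuv, exp_uvv, exp_uuvv. field. lra.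
Qed.

Lemma event_density_derivable x : ex_derive (event_density l1 l2 a th) x.
Proof. unfold event_density. auto_derive. easy. Qed.

Lemma event_density_primitive_at_0 :
  event_density_primitive l1 l2 a th 0 = - P_closed l1 l2 a th.
Proof.
  unfold event_density_primitive, P_closed. rewrite !Rmult_0_r, Ropp_0, exp_0.
  field. lra.
Qed.

Lemma is_lim_event_density_primitive :
  is_lim (event_density_primitive l1 l2 a th) p_infty 0.
Proof.
  unfold event_density_primitive.
  repeat first [ apply (is_lim_plus _ _ _ 0 0 0)
               | apply is_lim_exp_decay; lra
               | unfold is_Rbar_plus, Rbar_plus'; now rewrite Rplus_0_r ].
Qed.

End EventDensity.

Theorem mainTheorem2 (l1 l2 a th : R) :
  0 < l1 -> 0 < l2 -> 0 < a -> -1 <= th <= 1 ->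
  exists g : R -> R,
    (forall x1, 0 <= x1 ->
       is_RInt (fun x2 => fgm_exp_pdf l1 l2 th x1 x2) 0 (a * x1) (g x1)) /\
    is_RInt_0_inf g (P_closed l1 l2 a th) /\
    (forall x, 0 < x ->
       g x / P_closed l1 l2 a th
       = gwed_pdf (l1 / P_closed l1 l2 a th) l1 l2 a th x).
Proof.
  (* The range of [th] only makes [fgm_exp_pdf] nonnegative; the identities
     hold for every [th]. *)
  intros l1_gt0 l2_gt0 a_gt0 _.
  exists (event_density l1 l2 a th). split; [| split].
  - intros x1 _.
    pose proof (fgm_exp_pdf_section_integral l1 l2 th x1 (a * x1)) as section.
    replace (l2 * (a * x1)) with (l2 * a * x1) in section by ring.
    exact section.
  - replace (P_closed l1 l2 a th)
      with (0 - event_density_primitive l1 l2 a th 0)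
      by (rewrite event_density_primitive_at_0 by assumption; ring).
    apply is_RInt_0_inf_primitive.
    + now apply event_density_primitive_derive.
    + now apply event_density_derivable.
    + now apply is_lim_event_density_primitive.
  - intros x _. unfold event_density, gwed_pdf, Rdiv. ring.
Qed.
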